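(* Let $(x,q)\in\mathbf J$ and suppose $q$ is not an integer. Then: (i) for each positive integer $m$ there exists a neighborhood $\mathbf W\subset\mathbb R^2$ of $(x,q)$ such that $b_1(y,r)\ldots b_m(y,r)\le b_1(x,q)\ldots b_m(x,q)$ (lexicographically) for all $(y,r)\in\mathbf W\cap\mathbf J$; (ii) if $(y_n,r_n)$ is a sequence in $\mathbf J$ converging to $(x,q)$ from above (i.e. $y_n\ge x$ and $r_n\ge q$ for all $n$), then the sequences $(b_i(y_n,r_n))_{i\ge1}$ converge coordinate-wise to $(b_i(x,q))_{i\ge1}$ as $n\to\infty$.
   Context: For real $q>1$ let $\lceil q\rceil$ be the smallest integer $\ge q$ and $A_q=\{0,\ldots,\lceil q\rceil-1\}$. Let $\mathbf J$ be the set of $(x,q)$ with $q>1$ and $x\in J_q:=[0,(\lceil q\rceil-1)/(q-1)]$. For $(x,q)\in\mathbf J$, the greedy expansion $(b_i(x,q))$ is defined recursively: $b_n(x,q)$ is the largest element of $A_q$ with $\sum_{i=1}^n b_i(x,q)q^{-i}\le x$. Finite words of equal length are compared lexicographically. *)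

From Stdlib Require Import Reals Lra Lia List.
Open Scope R_scope.

(* ceil_Z q = smallest integer >= q.  [up q] satisfies q < up q <= q + 1. *)
Definition ceil_Z (q : R) : Z :=
  if Req_EM_T (IZR (up q - 1)) q then (up q - 1)%Z else up q.

(* number of digits: ceil q, so A_q = {0, ..., ceil q - 1} *)
Definition nq (q : R) : nat := Z.to_nat (ceil_Z q).

Definition inJ (x q : R) : Prop :=
  1 < q /\ 0 <= x /\ x <= (IZR (ceil_Z q) - 1) / (q - 1).

(* largest a in {0,...,c-1} with s + a q^{-n} <= x (0 if none) *)
Fixpoint best_digit (c : nat) (x q s : R) (n : nat) : nat :=
  match c with
  | O => O
  | S k => if Rle_dec (s + INR k / q ^ n) x then k else best_digit k x q s n
  end.

(* gsum x q n = sum_{i=1}^n b_i(x,q) q^{-i} *)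
Fixpoint gsum (x q : R) (n : nat) : R :=
  match n with
  | O => 0
  | S k => let s := gsum x q k in
           s + INR (best_digit (nq q) x q s (S k)) / q ^ (S k)
  end.

(* greedy digit b_n(x,q), meaningful for n >= 1 *)
Definition b (x q : R) (n : nat) : nat :=
  best_digit (nq q) x q (gsum x q (pred n)) n.

Definition bword (x q : R) (m : nat) : list nat := map (b x q) (seq 1 m).

(* lexicographic order on finite words (used for words of equal length) *)
Fixpoint lex_le (u v : list nat) : Prop :=
  match u, v with
  | nil, _ => True
  | a :: u', c :: v' => (a < c)%nat \/ (a = c /\ lex_le u' v')
  | _ :: _, nil => False
  end.

(* Let q be non-integral.  Then the digit count ceil(q) is locally constant
   around q, so near (x, q) every greedy digit is chosen from the same
   alphabet, and whether a digit a is admissible at position n + 1 is decided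
   by comparing y with s + a / r^(n+1), where s is the value of the first n
   digits in base r.  Once the first n digits of (y, r) and (x, q) agree, this
   threshold depends continuously on r: the strict inequality that rules out
   b_(n+1)(x,q) + 1 persists nearby, which bounds the next digit from above.
   The threshold is also nonincreasing in r, so for y >= x and r >= q the
   digit b_(n+1)(x,q) stays admissible, which bounds it from below; by
   induction on n, all digits agree on a neighbourhood of (x, q) taken
   from above. *)
From Stdlib Require Import Reals Lra Lia List Arith.
Open Scope R_scope.

Lemma best_digit_le_pred c x q s n : (best_digit c x q s n <= pred c)%nat.
Proof.
  induction c as [|c IH]; simpl; [lia|].
  destruct (Rle_dec _ _); [lia|]. destruct c; simpl in *; lia.
Qed.

Lemma best_digit_spec c x q s n :
  best_digit c x q s n = O \/ s + INR (best_digit c x q s n) / q ^ n <= x.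
Proof. induction c; simpl; [now left|]. destruct (Rle_dec _ _); auto. Qed.

Lemma best_digit_max c x q s n k :
  (best_digit c x q s n < k < c)%nat -> x < s + INR k / q ^ n.
Proof.
  induction c as [|c IH]; simpl; intros Hk; [lia|].
  destruct (Rle_dec _ _) as [Hle|Hnle]; [lia|].
  destruct (Nat.eq_dec k c) as [->|Hne]; [lra | apply IH; lia].
Qed.

Lemma le_best_digit c x q s n a :
  (a < c)%nat -> s + INR a / q ^ n <= x -> (a <= best_digit c x q s n)%nat.
Proof.
  intros Hac Ha. destruct (le_lt_dec a (best_digit c x q s n)) as [|Hlt]; [easy|].
  pose proof (best_digit_max c x q s n a (conj Hlt Hac)). lra.
Qed.

Lemma best_digit_le c x q s n a :
  0 < q -> x < s + INR (S a) / q ^ n -> (best_digit c x q s n <= a)%nat.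
Proof.
  intros Hq Hx. destruct (le_lt_dec (best_digit c x q s n) a) as [|Hlt]; [easy|].
  destruct (best_digit_spec c x q s n) as [H0|Hle]; [lia|].
  enough (INR (S a) / q ^ n <= INR (best_digit c x q s n) / q ^ n) by lra.
  apply Rmult_le_compat_r; [apply Rlt_le, Rinv_0_lt_compat, pow_lt, Hq|].
  apply le_INR; lia.
Qed.

Fixpoint digit_sum (d : nat -> nat) (r : R) (n : nat) : R :=
  match n with
  | O => 0
  | S k => digit_sum d r k + INR (d (S k)) / r ^ S k
  end.

Definition agree (d e : nat -> nat) (n : nat) : Prop :=
  forall i, (1 <= i <= n)%nat -> d i = e i.

Lemma gsum_digit_sum y r n : gsum y r n = digit_sum (b y r) r n.
Proof. induction n as [|n IH]; simpl; [easy|]. now rewrite <- IH. Qed.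

Lemma b_succ y r n :
  b y r (S n) = best_digit (nq r) y r (digit_sum (b y r) r n) (S n).
Proof. unfold b at 1. simpl pred. now rewrite gsum_digit_sum. Qed.

Lemma digit_sum_agree d e r n : agree d e n -> digit_sum d r n = digit_sum e r n.
Proof.
  induction n as [|n IH]; simpl; intros H; [easy|].
  rewrite (H (S n)) by lia. f_equal. apply IH. intros i Hi. apply H. lia.
Qed.

Lemma digit_term_antitone k q r m : 0 < q <= r -> INR k / r ^ m <= INR k / q ^ m.
Proof.
  intros Hqr. apply Rmult_le_compat_l; [apply pos_INR|].
  apply Rinv_le_contravar; [apply pow_lt; lra | apply pow_incr; lra].
Qed.

Lemma digit_sum_antitone d q r n : 0 < q <= r -> digit_sum d r n <= digit_sum d q n.
Proof.
  intros Hqr. induction n as [|n IH]; cbn [digit_sum]; [lra|].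
  pose proof (digit_term_antitone (d (S n)) q r (S n) Hqr). lra.
Qed.

Lemma continuity_pt_digit_term k m q : 0 < q -> continuity_pt (fun r => INR k / r ^ m) q.
Proof.
  intros Hq. apply (continuity_pt_div (fun _ => INR k) (fun r => r ^ m)).
  - apply continuity_pt_const. now intros ? ?.
  - apply derivable_continuous_pt, derivable_pt_pow.
  - apply pow_nonzero; lra.
Qed.

Lemma continuity_pt_digit_sum d n q : 0 < q -> continuity_pt (fun r => digit_sum d r n) q.
Proof.
  intros Hq. induction n as [|n IH]; cbn [digit_sum].
  - apply continuity_pt_const. now intros ? ?.
  - apply (continuity_pt_plus (fun r => digit_sum d r n)); [exact IH|].
    now apply continuity_pt_digit_term.
Qed.

Definition near (x q : R) (P : R -> R -> Prop) : Prop :=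
  exists d, 0 < d /\ forall y r, Rabs (y - x) < d -> Rabs (r - q) < d -> P y r.

Section Neighbourhoods.

Variables x q : R.

Lemma near_trivial (P : R -> R -> Prop) : (forall y r, P y r) -> near x q P.
Proof. intros H. exists 1. split; [lra|]. intros y r _ _. apply H. Qed.

Lemma near_and (P Q : R -> R -> Prop) :
  near x q P -> near x q Q -> near x q (fun y r => P y r /\ Q y r).
Proof.
  intros [d1 [Hd1 H1]] [d2 [Hd2 H2]]. exists (Rmin d1 d2).
  split; [now apply Rmin_pos|]. intros y r Hy Hr.
  pose proof (Rmin_l d1 d2). pose proof (Rmin_r d1 d2).
  split; [apply H1 | apply H2]; lra.
Qed.

Lemma near_mono (P Q : R -> R -> Prop) :
  near x q P -> (forall y r, P y r -> Q y r) -> near x q Q.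
Proof. intros [d [Hd H]] HPQ. exists d. split; auto. Qed.

Lemma near_forall_lt (P : nat -> R -> R -> Prop) m :
  (forall n, near x q (P n)) -> near x q (fun y r => forall n, (n < m)%nat -> P n y r).
Proof.
  intros H. induction m as [|m IH].
  - apply near_trivial. intros y r n Hn. lia.
  - apply (near_mono _ _ (near_and _ _ IH (H m))). intros y r [Hlt Hm] n Hn.
    destruct (Nat.eq_dec n m) as [->|Hne]; [exact Hm | apply Hlt; lia].
Qed.

Lemma near_lt_continuous (g : R -> R) :
  continuity_pt g q -> x < g q -> near x q (fun y r => y < g r).
Proof.
  intros Hg Hx. set (e := (g q - x) / 2).
  destruct (Hg e ltac:(unfold e; lra)) as [al [Hal Hclose]].
  exists (Rmin al e). split; [apply Rmin_pos; unfold e; lra|].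
  intros y r Hy Hr. pose proof (Rmin_l al e). pose proof (Rmin_r al e).
  assert (Hgr : Rabs (g r - g q) < e).
  { destruct (Req_dec r q) as [->|Hne].
    - rewrite Rminus_diag, Rabs_R0. unfold e; lra.
    - apply (Hclose r). split; [split; [exact I | congruence] | simpl; unfold R_dist; lra]. }
  apply Rabs_def2 in Hgr. apply Rabs_def2 in Hy. unfold e in *. lra.
Qed.

Lemma near_eventually (P : R -> R -> Prop) (ys rs : nat -> R) :
  near x q P -> Un_cv ys x -> Un_cv rs q ->
  exists N, forall n, (N <= n)%nat -> P (ys n) (rs n).
Proof.
  intros [d [Hd H]] Hys Hrs.
  destruct (Hys d Hd) as [N1 HN1]. destruct (Hrs d Hd) as [N2 HN2].
  exists (max N1 N2). intros n Hn. apply H; [apply HN1 | apply HN2]; lia.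
Qed.

End Neighbourhoods.

Lemma ceil_Z_eq q z : IZR z - 1 < q < IZR z -> ceil_Z q = z.
Proof.
  intros Hz. unfold ceil_Z.
  replace (up q) with z by (apply tech_up; lra).
  destruct Req_EM_T as [Heq|]; [|easy]. rewrite minus_IZR in Heq. simpl in Heq. lra.
Qed.

Lemma near_nq x q : 1 < q -> (forall z : Z, q <> IZR z) ->
  near x q (fun y r => 1 < r /\ nq r = nq q).
Proof.
  intros Hq Hz. destruct (archimed q) as [Hup1 Hup2].
  assert (Hup : IZR (up q) - 1 < q).
  { destruct Hup2 as [|Heq]; [lra|]. exfalso. apply (Hz (up q - 1)%Z).
    rewrite minus_IZR. simpl. lra. }
  set (d := Rmin (q - 1) (Rmin (q - (IZR (up q) - 1)) (IZR (up q) - q))).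
  exists d. split; [unfold d; repeat apply Rmin_pos; lra|].
  intros y r _ Hr. apply Rabs_def2 in Hr.
  pose proof (Rmin_l (q - 1) (Rmin (q - (IZR (up q) - 1)) (IZR (up q) - q))).
  pose proof (Rmin_r (q - 1) (Rmin (q - (IZR (up q) - 1)) (IZR (up q) - q))).
  pose proof (Rmin_l (q - (IZR (up q) - 1)) (IZR (up q) - q)).
  pose proof (Rmin_r (q - (IZR (up q) - 1)) (IZR (up q) - q)).
  unfold d in *. split; [lra|]. unfold nq.
  rewrite (ceil_Z_eq r (up q)), (ceil_Z_eq q (up q)); [reflexivity | lra ..].
Qed.

Section GreedyDigitsNear.

Variables x q : R.
Hypothesis Hq : 1 < q.
Hypothesis Hq_nonint : forall z : Z, q <> IZR z.

Lemma near_b_succ_le n :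
  near x q (fun y r => agree (b y r) (b x q) n -> (b y r (S n) <= b x q (S n))%nat).
Proof.
  set (a := b x q (S n)).
  pose proof (near_nq x q Hq Hq_nonint) as Hnq.
  destruct (le_lt_dec (nq q) (S a)) as [Htop|Hlt].
  - apply (near_mono _ _ _ _ Hnq). intros y r [_ Hr] _.
    rewrite b_succ.
    pose proof (best_digit_le_pred (nq r) y r (digit_sum (b y r) r n) (S n)). lia.
  - assert (Hx : x < digit_sum (b x q) q n + INR (S a) / q ^ S n).
    { apply best_digit_max with (c := nq q). rewrite <- b_succ. fold a. lia. }
    pose proof (near_lt_continuous x q (fun r => digit_sum (b x q) r n + INR (S a) / r ^ S n)
      (continuity_pt_plus _ _ q (continuity_pt_digit_sum _ n q ltac:(lra))
                                (continuity_pt_digit_term _ _ q ltac:(lra))) Hx) as Hcont.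
    apply (near_mono _ _ _ _ (near_and _ _ _ _ Hnq Hcont)).
    intros y r [[Hr _] Hy] Hagree. rewrite b_succ.
    apply best_digit_le; [lra|]. now rewrite (digit_sum_agree _ _ r n Hagree).
Qed.

Lemma near_b_succ_ge_above n :
  near x q (fun y r => x <= y -> q <= r -> agree (b y r) (b x q) n ->
    (b x q (S n) <= b y r (S n))%nat).
Proof.
  apply (near_mono _ _ _ _ (near_nq x q Hq Hq_nonint)).
  intros y r [_ Hr] Hxy Hqr Hagree. set (a := b x q (S n)).
  destruct (Nat.eq_dec a 0) as [->|Ha0]; [lia|].
  assert (Hadm : digit_sum (b x q) q n + INR a / q ^ S n <= x).
  { destruct (best_digit_spec (nq q) x q (digit_sum (b x q) q n) (S n)) as [H0|H];
      rewrite <- b_succ in *; [contradiction | exact H]. }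
  assert (Ha : (a <= pred (nq q))%nat).
  { unfold a. rewrite b_succ. apply best_digit_le_pred. }
  rewrite b_succ. apply le_best_digit; [lia|].
  rewrite (digit_sum_agree _ _ r n Hagree).
  pose proof (digit_sum_antitone (b x q) q r n ltac:(lra)).
  pose proof (digit_term_antitone a q r (S n) ltac:(lra)). lra.
Qed.

Lemma near_agree_above n :
  near x q (fun y r => x <= y -> q <= r -> agree (b y r) (b x q) n).
Proof.
  induction n as [|n IH].
  - apply near_trivial. intros y r _ _ i Hi. lia.
  - apply (near_mono _ _ _ _ (near_and _ _ _ _ IH
      (near_and _ _ _ _ (near_b_succ_le n) (near_b_succ_ge_above n)))).
    intros y r [Hagree [Hle Hge]] Hxy Hqr i Hi.
    specialize (Hagree Hxy Hqr).
    destruct (Nat.eq_dec i (S n)) as [->|Hne].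
    + specialize (Hle Hagree). specialize (Hge Hxy Hqr Hagree). lia.
    + apply Hagree. lia.
Qed.

End GreedyDigitsNear.

Lemma lex_le_map_seq (f g : nat -> nat) k m :
  (forall i, (k <= i < k + m)%nat ->
     (forall l, (k <= l < i)%nat -> f l = g l) -> (f i <= g i)%nat) ->
  lex_le (map f (seq k m)) (map g (seq k m)).
Proof.
  revert k. induction m as [|m IH]; intros k H; simpl; [exact I|].
  assert (Hk : (f k <= g k)%nat) by (apply H; [lia | intros l Hl; lia]).
  destruct (le_lt_eq_dec _ _ Hk) as [Hlt|Heq]; [now left | right; split; [exact Heq|]].
  apply IH. intros i Hi Hpre. apply H; [lia|]. intros l Hl.
  destruct (Nat.eq_dec l k) as [->|Hne]; [exact Heq | apply Hpre; lia].
Qed.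

Theorem lemma2p5 (x q : R) :
  inJ x q -> (forall z : Z, q <> IZR z) ->
  (forall m : nat, (0 < m)%nat ->
     exists delta : R, 0 < delta /\
       forall y r : R, Rabs (y - x) < delta -> Rabs (r - q) < delta ->
         inJ y r -> lex_le (bword y r m) (bword x q m))
  /\
  (forall ys rs : nat -> R,
     (forall n, inJ (ys n) (rs n)) ->
     (forall n, x <= ys n /\ q <= rs n) ->
     Un_cv ys x -> Un_cv rs q ->
     forall i : nat, (1 <= i)%nat ->
       Un_cv (fun n => INR (b (ys n) (rs n) i)) (INR (b x q i))).
Proof.
  intros [Hq _] Hz. split.
  - intros m _.
    destruct (near_forall_lt x q _ m (near_b_succ_le x q Hq Hz)) as [d [Hd Hnear]].
    exists d. split; [exact Hd|]. intros y r Hy Hr _.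
    apply lex_le_map_seq. intros i Hi Hpre.
    replace i with (S (i - 1))%nat by lia.
    apply (Hnear y r Hy Hr (i - 1)%nat); [lia|]. intros l Hl. apply Hpre. lia.
  - intros ys rs _ Habove Hys Hrs i Hi eps Heps.
    destruct (near_eventually x q _ ys rs (near_agree_above x q Hq Hz i) Hys Hrs) as [N HN].
    exists N. intros n Hn. destruct (Habove n) as [Hxy Hqr].
    rewrite (HN n Hn Hxy Hqr i) by lia.
    unfold R_dist. rewrite Rminus_diag, Rabs_R0. exact Heps.
Qed.
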